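(* For every integer $m\ge1$, $$\mathfrak p^{(2m)}=\sum_{a=0}^{m-1}q^{(3-2m)a}\begin{bmatrix}m-1\\ a\end{bmatrix}_{q^2}\mathfrak g^{(2m-2a)},\qquad \mathfrak p^{(2m+1)}=\sum_{a=0}^{m-1}q^{(1-2m)a}\begin{bmatrix}m-1\\ a\end{bmatrix}_{q^2}\mathfrak g^{(2m-2a+1)}.$$ In particular, $\mathfrak p^{(n)}(\kappa)\in\mathbb Z[q,q^{-1}]$ for all $n\in\mathbb N$ and all $\kappa=[2\ell-1]$ with $\ell\in\mathbb Z$.
   Context: $q$ is an indeterminate, $[n]=\frac{q^n-q^{-n}}{q-q^{-1}}$ for $n\in\mathbb Z$, $[n]!=[1]\cdots[n]$, $[0]!=1$. For $0\le a\le N$, $\begin{bmatrix}N\\ a\end{bmatrix}_{q^2}$ denotes the balanced Gaussian binomial coefficient in $q^2$, i.e. $\frac{[N]_{q^2}!}{[a]_{q^2}![N-a]_{q^2}!}$ with $[k]_{q^2}=\frac{q^{2k}-q^{-2k}}{q^2-q^{-2}}$. The polynomials $\mathfrak p_n(x)$ are defined by $\mathfrak p_0=1$, $\mathfrak p_n=0$ for $n<0$, $\mathfrak p_{n+1}=x\,\mathfrak p_n+q^{2-2n}[n][n-2]\mathfrak p_{n-1}$ ($n\ge0$); $\mathfrak p^{(n)}=\mathfrak p_n/[n]!$. The polynomials $\mathfrak g_n(x)$ are $\mathfrak g_{2m}(x)=\prod_{i=1}^{m}(x^2-[2i-1]^2)$ and $\mathfrak g_{2m+1}(x)=x\prod_{i=1}^m(x^2-[2i-1]^2)$;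 $\mathfrak g^{(n)}=\mathfrak g_n/[n]!$. *)

From mathcomp Require Import all_boot all_order all_algebra.
Set Implicit Arguments. Unset Strict Implicit. Unset Printing Implicit Defensive.
Import Order.TTheory GRing.Theory Num.Theory.
Local Open Scope ring_scope.

Notation tofrac := (@FracField.tofrac _).

(* The field Q(q) realised as the fraction field of Z[q]; q is the indeterminate. *)
Definition Fq : fieldType := {fraction {poly int}}.
Definition qq : Fq := tofrac ('X : {poly int}).

Definition in_Zqqinv (x : Fq) : Prop :=
  exists (p : {poly int}) (k : nat), x = tofrac p / qq ^+ k.

Definition qint (n : int) : Fq := (qq ^ n - qq ^ (- n)) / (qq - qq^-1).
Definition qfact (n : nat) : Fq := \prod_(i < n) qint (i.+1)%:Z.

Definition qint2 (k : int) : Fq :=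
  (qq ^ (2 * k) - qq ^ (- (2 * k))) / (qq ^+ 2 - qq ^- 2).
Definition qfact2 (n : nat) : Fq := \prod_(i < n) qint2 (i.+1)%:Z.
(* balanced Gaussian binomial in q^2, for 0 <= a <= N *)
Definition qbinom2 (N a : nat) : Fq := qfact2 N / (qfact2 a * qfact2 (N - a)).

(* pair (p_n, p_{n+1}); p_0 = 1, p_1 = x (since p_{-1} = 0),
   p_{n+2} = x p_{n+1} + q^{2-2(n+1)} [n+1][n-1] p_n *)
Fixpoint ppair (n : nat) : {poly Fq} * {poly Fq} :=
  match n with
  | 0 => (1, 'X)
  | n'.+1 => let (a, b) := ppair n' in
      (b, 'X * b + (qq ^ (2 - 2 * (n'.+1)%:Z) * qint (n'.+1)%:Z
                     * qint (n'%:Z - 1))%:P * a)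
  end.
Definition pfrak (n : nat) : {poly Fq} := (ppair n).1.
Definition pfrakdiv (n : nat) : {poly Fq} := (qfact n)^-1 *: pfrak n.

Definition gfrak (n : nat) : {poly Fq} :=
  (if odd n then 'X else 1) *
  \prod_(i < n./2) ('X ^+ 2 - (qint (2 * (i.+1)%:Z - 1) ^+ 2)%:P).
Definition gfrakdiv (n : nat) : {poly Fq} := (qfact n)^-1 *: gfrak n.

From mathcomp Require Import all_boot all_order all_algebra.
From mathcomp Require Import ring zify.
Import Order.TTheory GRing.Theory Num.Theory.
Set Implicit Arguments. Unset Strict Implicit. Unset Printing Implicit Defensive.
Local Open Scope ring_scope.

(* Everything holds for any nonzero q that is not a root of unity.  The two
   expansions are proved together by induction on m, from the recurrence
   [n+2] p^(n+2) = x p^(n+1) + q^(-2n) [n-1] p^(n) and from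
   x g^(2k) = [2k+1] g^(2k+1), x g^(2k+1) = [2k+2] g^(2k+2) + [2k+1] g^(2k);
   after the absorption identities of the q^2-binomials, comparing
   coefficients is an identity between Laurent polynomials.
   For integrality, extend the q^2-binomial [n choose k] to all integers n.
   Pascal's rule holds for every n, in both directions, so these are Laurent
   polynomials; and since [x]^2 - [y]^2 = [x-y][x+y], the value of g^(n) at
   [2l-1] is such a binomial (or a sum of two) times prod_j (q^j + q^-j). *)

Lemma sum_ord_shift (V : zmodType) (m : nat) (f : nat -> V) :
  f m = 0 -> \sum_(a < m) f a = f 0%N + \sum_(a < m) f a.+1.
Proof.
move=> fm0; transitivity (\sum_(a < m.+1) f a); last by rewrite big_ord_recl.
by rewrite big_ord_recr /= fm0 addr0.
Qed.

(** * Quantum integers and q^2-binomial coefficients *)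

Section GenericQ.
Variables (F : fieldType) (q : F).

(* qnum, qfac, qnum2, qfac2, qgauss2 and ppoly_pair, ppoly, ppoly_div, gpoly,
   gpoly_div below are qint, qfact, qint2, qfact2, qbinom2, ppair, pfrak,
   pfrakdiv, gfrak, gfrakdiv with the indeterminate replaced by q. *)
Definition qnum (n : int) : F := (q ^ n - q ^ (- n)) / (q - q^-1).
Definition qfac (n : nat) : F := \prod_(i < n) qnum (i.+1)%:Z.
Definition qnum2 (k : int) : F :=
  (q ^ (2 * k) - q ^ (- (2 * k))) / (q ^+ 2 - q ^- 2).
Definition qfac2 (n : nat) : F := \prod_(i < n) qnum2 (i.+1)%:Z.
Definition qgauss2 (N a : nat) : F := qfac2 N / (qfac2 a * qfac2 (N - a)).

(* [qbinomz n k] is the q^2-binomial coefficient [n choose k]_{q^2}, for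
   every integer n. *)
Definition qfall (n : int) (k : nat) : F := \prod_(j < k) qnum (2 * (n - j%:Z)).
Definition qbinomz (n : int) (k : nat) : F := qfall n k / qfall k k.

Definition qplus_prod (k : nat) : F := \prod_(j < k) (q ^ j.+1%:Z + q ^ (- j.+1%:Z)).

Lemma qnum0 : qnum 0 = 0.
Proof. by rewrite /qnum oppr0 subrr mul0r. Qed.

Lemma qnumN (x : int) : qnum (- x) = - qnum x.
Proof. by rewrite /qnum opprK -mulNr opprB. Qed.

Lemma qfacS n : qfac n.+1 = qfac n * qnum n.+1%:Z.
Proof. by rewrite /qfac big_ord_recr. Qed.

Lemma qfallSr (n : int) k : qfall n k.+1 = qfall n k * qnum (2 * (n - k%:Z)).
Proof. by rewrite /qfall big_ord_recr. Qed.

Lemma qfallSl (n : int) k : qfall (n + 1) k.+1 = qnum (2 * (n + 1)) * qfall n k.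
Proof.
rewrite /qfall big_ord_recl subr0; congr (_ * _); apply: eq_bigr => j _.
by rewrite /= /bump leq0n intS opprD addrA addrK.
Qed.

Lemma qfall_add (n : int) a b : qfall n (a + b) = qfall n a * qfall (n - a%:Z) b.
Proof.
rewrite /qfall big_split_ord; congr (_ * _); apply: eq_bigr => j _.
by rewrite /= PoszD opprD addrA.
Qed.

Lemma qfall_eq0 (n k : nat) : (n < k)%N -> qfall n k = 0.
Proof. by move=> nk; rewrite /qfall (bigD1 (Ordinal nk)) //= subrr mulr0 qnum0 mul0r. Qed.

Lemma qbinomz0 (n : int) : qbinomz n 0 = 1.
Proof. by rewrite /qbinomz /qfall !big_ord0 divr1. Qed.

Lemma qbinomz_eq0 (n k : nat) : (n < k)%N -> qbinomz n k = 0.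
Proof. by move=> nk; rewrite /qbinomz qfall_eq0 // mul0r. Qed.

Hypothesis q_neq0 : q != 0.
Hypothesis qXn_neq1 : forall n, (0 < n)%N -> q ^+ n != 1.

Lemma qz_neq0 (z : int) : q ^ z != 0.
Proof. exact: expfz_neq0. Qed.

Lemma qz_neq1 (z : int) : z != 0 -> q ^ z != 1.
Proof.
case: z => [n|n]; rewrite ?NegzE ?eqr_oppLR ?oppr0 /= => nz.
  by rewrite qXn_neq1 // lt0n.
by rewrite -invr_expz invr_eq1 qXn_neq1.
Qed.

Lemma qsqr_sub1_neq0 : q * q - 1 != 0.
Proof. by rewrite -expr2 subr_eq0 qXn_neq1. Qed.

Lemma qsub_neq0 : q - q^-1 != 0.
Proof.
have -> : q - q^-1 = (q * q - 1) / q by field.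
by rewrite mulf_neq0 ?invr_eq0 ?qsqr_sub1_neq0.
Qed.

Ltac qfield := rewrite /qnum ?opprD ?opprK ?(expfzDr _ _ q_neq0) -?invr_expz;
  field; rewrite ?q_neq0 ?qz_neq0 ?qsub_neq0 ?qsqr_sub1_neq0.

Lemma qnum1 : qnum 1 = 1.
Proof. by rewrite /qnum expr1z exprN1 divff ?qsub_neq0. Qed.

Lemma qnum_neq0 (z : int) : z != 0 -> qnum z != 0.
Proof.
move=> z_neq0; rewrite mulf_neq0 ?invr_eq0 ?qsub_neq0 // subr_eq0 -invr_expz.
apply: contraNN (qz_neq1 (_ : z + z != 0)) => [/eqP qzV|]; last by lia.
by rewrite expfzDr // {1}qzV mulVf ?qz_neq0.
Qed.

Lemma qnumD (x y : int) : qnum (x + y) = q ^ y * qnum x + q ^ (- x) * qnum y.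
Proof. by qfield. Qed.

Lemma qnum_sqr_sub (x y : int) : qnum x ^+ 2 - qnum y ^+ 2 = qnum (x - y) * qnum (x + y).
Proof. by qfield. Qed.

Lemma qnum_sum (x y : int) : qnum (x + y) + qnum (x - y) = qnum x * (q ^ y + q ^ (- y)).
Proof. by qfield. Qed.

Lemma qnum_double (x : int) : qnum (2 * x) = qnum x * (q ^ x + q ^ (- x)).
Proof. by rewrite -qnum_sum subrr qnum0 addr0 -mulr2n mulr_natl. Qed.

Lemma qfall_diagS (k : nat) : qfall k.+1 k.+1 = qnum (2 * k.+1%:Z) * qfall k k.
Proof. by have := qfallSl k k; rewrite addrC -intS. Qed.

Lemma qfall_diag_neq0 (k : nat) : qfall k k != 0.
Proof.
by apply/prodf_neq0 => j _; apply: qnum_neq0; have := ltn_ord j; lia.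
Qed.

Lemma qfall_diag (k : nat) : qfall k k = qfac k * qplus_prod k.
Proof.
elim: k => [|k IHk]; first by rewrite /qfall /qfac /qplus_prod !big_ord0 mulr1.
rewrite qfall_diagS IHk qfacS /qplus_prod big_ord_recr qnum_double -/(qplus_prod k) /=.
ring.
Qed.

Lemma qplus_prod_neq0 k : qplus_prod k != 0.
Proof. by apply: contraNN (qfall_diag_neq0 k) => /eqP qp0; rewrite qfall_diag qp0 mulr0. Qed.

Lemma qbinomz_pascal (n : int) k :
  qbinomz (n + 1) k.+1 =
  q ^ (2 * k.+1%:Z) * qbinomz n k.+1 + q ^ (- (2 * (n - k%:Z))) * qbinomz n k.
Proof.
have top : qnum (2 * (n + 1)) =
    q ^ (2 * k.+1%:Z) * qnum (2 * (n - k%:Z)) + q ^ (- (2 * (n - k%:Z))) * qnum (2 * k.+1%:Z).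
  by rewrite -qnumD; congr qnum; lia.
rewrite /qbinomz qfall_diagS qfallSl qfallSr top.
have h1 := qfall_diag_neq0 k; have h2 : qnum (2 * k.+1%:Z) != 0 by apply: qnum_neq0; lia.
by field; rewrite h1 h2.
Qed.

Lemma qbinomz_absorb (n : int) k :
  qnum (2 * (n + 1)) * qbinomz n k = qnum (2 * k.+1%:Z) * qbinomz (n + 1) k.+1.
Proof.
rewrite /qbinomz qfallSl qfall_diagS.
have h1 := qfall_diag_neq0 k; have h2 : qnum (2 * k.+1%:Z) != 0 by apply: qnum_neq0; lia.
by field; rewrite h1 h2.
Qed.

Lemma qbinomz_absorb_top (n : int) k :
  qnum (2 * (n + 1)) * qbinomz n k = qnum (2 * (n + 1 - k%:Z)) * qbinomz (n + 1) k.
Proof.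
by rewrite /qbinomz !mulrA -qfallSl qfallSr [_ * qnum _]mulrC.
Qed.

Lemma qnum2E (k : int) : qnum2 k = qnum (2 * k) / qnum 2.
Proof. by rewrite /qnum2 /qnum -exprnP -exprnN invf_div mulrA divfK ?qsub_neq0. Qed.

Lemma qfac2_qfall n : qfac2 n = qfall n n / qnum 2 ^+ n.
Proof.
have qnum2_neq0 : qnum 2 != 0 by apply: qnum_neq0.
elim: n => [|n IHn]; first by rewrite /qfac2 /qfall !big_ord0 expr0 divr1.
rewrite /qfac2 big_ord_recr -/(qfac2 n) IHn qnum2E qfall_diagS exprS /=.
by field; rewrite qnum2_neq0 expf_neq0.
Qed.

Lemma qgauss2_qbinomz N a : (a <= N)%N -> qgauss2 N a = qbinomz N a.
Proof.
move=> le_aN; have := qfall_add N a (N - a); rewrite subnKC // subzn // => split_diag.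
rewrite /qgauss2 /qbinomz !qfac2_qfall split_diag.
have h1 := qfall_diag_neq0 a; have h2 := qfall_diag_neq0 (N - a).
have h3 : qnum 2 != 0 by apply: qnum_neq0.
have -> : qnum 2 ^+ N = qnum 2 ^+ a * qnum 2 ^+ (N - a) by rewrite -exprD subnKC.
by field; rewrite h1 h2 !expf_neq0.
Qed.

(** * Expansion of the polynomials p in terms of the polynomials g *)

Fixpoint ppoly_pair (n : nat) : {poly F} * {poly F} :=
  match n with
  | 0 => (1, 'X)
  | n'.+1 => let (a, b) := ppoly_pair n' in
      (b, 'X * b + (q ^ (2 - 2 * (n'.+1)%:Z) * qnum (n'.+1)%:Z
                     * qnum (n'%:Z - 1))%:P * a)
  end.
Definition ppoly (n : nat) : {poly F} := (ppoly_pair n).1.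
Definition ppoly_div (n : nat) : {poly F} := (qfac n)^-1 *: ppoly n.

Definition gpoly (n : nat) : {poly F} :=
  (if odd n then 'X else 1) *
  \prod_(i < n./2) ('X ^+ 2 - (qnum (2 * (i.+1)%:Z - 1) ^+ 2)%:P).
Definition gpoly_div (n : nat) : {poly F} := (qfac n)^-1 *: gpoly n.

Lemma ppolySS n : ppoly n.+2 = 'X * ppoly n.+1
  + (q ^ (2 - 2 * n.+1%:Z) * qnum n.+1%:Z * qnum (n%:Z - 1))%:P * ppoly n.
Proof. by rewrite /ppoly /=; case: (ppoly_pair n). Qed.

Lemma qfac_neq0 n : qfac n != 0.
Proof. by apply/prodf_neq0 => i _; apply: qnum_neq0. Qed.

Lemma ppoly_div_rec n : qnum n.+2%:Z *: ppoly_div n.+2 =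
  'X * ppoly_div n.+1 + (q ^ (- (2 * n%:Z)) * qnum (n%:Z - 1)) *: ppoly_div n.
Proof.
rewrite /ppoly_div ppolySS (_ : 2 - 2 * n.+1%:Z = - (2 * n%:Z)); last by lia.
rewrite !qfacS [LHS]scalerA scalerDr mul_polyC !scalerA scalerAr.
have h1 := qfac_neq0 n; have h2 : qnum n.+1%:Z != 0 by apply: qnum_neq0.
have h3 : qnum n.+2%:Z != 0 by apply: qnum_neq0.
by congr (_ * (_ *: _) + _ *: _); field; rewrite h1 h2 ?h3.
Qed.

Lemma gpoly_odd k : gpoly (2 * k).+1 = 'X * gpoly (2 * k).
Proof. by rewrite /gpoly /= mul2n odd_double uphalf_double doubleK mul1r. Qed.

Lemma gpoly_even k : gpoly (2 * k.+1) =
  gpoly (2 * k) * ('X ^+ 2 - (qnum (2 * k).+1%:Z ^+ 2)%:P).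
Proof.
rewrite /gpoly !mul2n !odd_double !doubleK !mul1r big_ord_recr /=.
by congr (_ * ('X ^+ 2 - (qnum _ ^+ 2)%:P)); lia.
Qed.

Lemma mulX_gpoly_div_even k :
  'X * gpoly_div (2 * k) = qnum (2 * k).+1%:Z *: gpoly_div (2 * k).+1.
Proof.
rewrite /gpoly_div gpoly_odd qfacS [RHS]scalerA [RHS]scalerAr.
have h1 := qfac_neq0 (2 * k); have h2 : qnum (2 * k).+1%:Z != 0 by apply: qnum_neq0.
by congr (_ * (_ *: _)); field; rewrite h1 h2.
Qed.

Lemma mulX_gpoly_div_odd k : 'X * gpoly_div (2 * k).+1 =
  qnum (2 * k).+2%:Z *: gpoly_div (2 * k).+2 + qnum (2 * k).+1%:Z *: gpoly_div (2 * k).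
Proof.
have g2 : gpoly (2 * k).+2 = gpoly (2 * k) * ('X ^+ 2 - (qnum (2 * k).+1%:Z ^+ 2)%:P).
  by rewrite -gpoly_even; congr gpoly; lia.
rewrite /gpoly_div g2 gpoly_odd !qfacS.
set f := qfac (2 * k); set c := qnum (2 * k).+1%:Z; set d := qnum (2 * k).+2%:Z.
have hf : f != 0 := qfac_neq0 (2 * k).
have hc : c != 0 by apply: qnum_neq0.
have hd : d != 0 by apply: qnum_neq0.
rewrite !scalerA (_ : d * (f * c * d)^-1 = (f * c)^-1); last by field; rewrite hf hc hd.
rewrite (_ : c * f^-1 = (f * c)^-1 * c ^+ 2); last by field; rewrite hf hc.
rewrite -scalerA -scalerDr -scalerAr; congr (_ *: _).
by rewrite -mul_polyC rmorphXn; ring.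
Qed.

Definition even_coef (m a : nat) : F :=
  q ^ ((3 - 2 * m%:Z) * a%:Z) * qbinomz (m - 1)%N a.
Definition odd_coef (m a : nat) : F :=
  q ^ ((1 - 2 * m%:Z) * a%:Z) * qbinomz (m - 1)%N a.

Lemma even_coef_rec m a : (a < m)%N ->
  qnum (2 * m).+2%:Z * even_coef m.+1 a.+1 =
  odd_coef m a.+1 * qnum (2 * (m - a))%N%:Z + odd_coef m a * qnum (2 * (m - a)).+1%:Z
  + q ^ (- (2 * (2 * m)%N%:Z)) * qnum ((2 * m)%N%:Z - 1) * even_coef m a.
Proof.
move=> lt_am; rewrite /even_coef /odd_coef subSS subn0.
have m1 : (m - 1)%N%:Z + 1 = m%:Z by lia.
have b1E := qbinomz_absorb_top (m - 1)%N a.+1; rewrite m1 in b1E.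
have b0E := qbinomz_absorb (m - 1)%N a; rewrite m1 in b0E.
move: b1E b0E; set b := qbinomz m a.+1; set b1 := qbinomz _ a.+1; set b0 := qbinomz _ a.
set M : int := m; set A : int := a.
have -> : (2 * m).+2%:Z = 2 * M + 2 by lia.
have -> : (2 * (m - a))%N%:Z = 2 * M - 2 * A by lia.
have -> : (2 * (m - a)).+1%:Z = 2 * M - 2 * A + 1 by lia.
have -> : (2 * m)%N%:Z = 2 * M by lia.
have -> : 2 * (M - a.+1%:Z) = 2 * M - 2 * A - 2 by lia.
have -> : 2 * a.+1%:Z = 2 * A + 2 by lia.
(* Factoring out q ^ ((1 - 2M) A) leaves exponents linear in M and A,
   which [qfield] handles. *)
have -> : (3 - 2 * m.+1%:Z) * a.+1%:Z = (1 - 2 * M) * A + (1 - 2 * M) by rewrite /M /A !intS; ring.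
have -> : (1 - 2 * M) * a.+1%:Z = (1 - 2 * M) * A + (1 - 2 * M) by rewrite /A intS; ring.
have -> : (3 - 2 * M) * A = (1 - 2 * M) * A + 2 * A by ring.
move=> b1E b0E; rewrite !expfzDr //.
have hM : qnum (2 * M) != 0 by apply: qnum_neq0; lia.
rewrite -(mulKf hM b1) b1E -(mulKf hM b0) b0E.
rewrite (_ : - (2 * (2 * M)) = - (2 * M) - 2 * M); last by lia.
qfield; by rewrite -expfzDr // subr_eq0 qz_neq1 //; rewrite /M; lia.
Qed.

Lemma odd_coef_rec m a : (a < m)%N ->
  qnum (2 * m).+3%:Z * odd_coef m.+1 a.+1 =
  even_coef m.+1 a.+1 * qnum (2 * (m - a)).+1%:Z
  + q ^ (- (2 * (2 * m).+1%:Z)) * qnum ((2 * m).+1%:Z - 1) * odd_coef m a.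
Proof.
move=> lt_am; rewrite /even_coef /odd_coef subSS subn0.
have b0E := qbinomz_absorb (m - 1)%N a.
rewrite (_ : (m - 1)%N%:Z + 1 = m%:Z) in b0E; last by lia.
move: b0E; set b := qbinomz m a.+1; set b0 := qbinomz _ a.
set M : int := m; set A : int := a.
have -> : (2 * m).+3%:Z = 2 * M + 3 by lia.
have -> : (2 * (m - a)).+1%:Z = 2 * M - 2 * A + 1 by lia.
have -> : (2 * m).+1%:Z - 1 = 2 * M by lia.
have -> : - (2 * (2 * m).+1%:Z) = - (2 * M) - 2 * M - 2 by lia.
have -> : 2 * a.+1%:Z = 2 * A + 2 by lia.
have -> : (1 - 2 * m.+1%:Z) * a.+1%:Z = (1 - 2 * M) * A - 2 * M - 2 * A - 1.
  by rewrite /M /A !intS; ring.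
have -> : (3 - 2 * m.+1%:Z) * a.+1%:Z = (1 - 2 * M) * A - 2 * M + 1.
  by rewrite /M /A !intS; ring.
move=> b0E; have hM : qnum (2 * M) != 0 by apply: qnum_neq0; lia.
rewrite -(mulKf hM b0) b0E !expfzDr //.
qfield; by rewrite -expfzDr // subr_eq0 qz_neq1 //; rewrite /M; lia.
Qed.

Definition even_expansion (m : nat) : Prop :=
  ppoly_div (2 * m) = \sum_(a < m) even_coef m a *: gpoly_div (2 * m - 2 * a).
Definition odd_expansion (m : nat) : Prop :=
  ppoly_div (2 * m).+1 = \sum_(a < m) odd_coef m a *: gpoly_div (2 * m - 2 * a).+1.

Lemma even_coef0 m : even_coef m 0 = 1.
Proof. by rewrite /even_coef mulr0 expr0z qbinomz0 mulr1. Qed.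

Lemma odd_coef0 m : odd_coef m 0 = 1.
Proof. by rewrite /odd_coef mulr0 expr0z qbinomz0 mulr1. Qed.

Lemma odd_coef_eq0 m : (0 < m)%N -> odd_coef m m = 0.
Proof. by move=> m_gt0; rewrite /odd_coef qbinomz_eq0 ?mulr0 // subn1 prednK. Qed.

Lemma even_expansion_step m : (0 < m)%N ->
  odd_expansion m -> even_expansion m -> even_expansion m.+1.
Proof.
move=> m_gt0 hodd heven; rewrite /even_expansion (_ : 2 * m.+1 = (2 * m).+2)%N; last by lia.
have c_neq0 : qnum (2 * m).+2%:Z != 0 by apply: qnum_neq0.
apply: (scalerI c_neq0).
rewrite ppoly_div_rec hodd heven mulr_sumr scaler_sumr.
under eq_bigr => a _ do rewrite -scalerAr -mulnBr mulX_gpoly_div_odd scalerDr.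
rewrite big_split /= (sum_ord_shift (f := fun a =>
  odd_coef m a *: (qnum (2 * (m - a)).+2%:Z *: gpoly_div (2 * (m - a)).+2))); last first.
  by rewrite odd_coef_eq0 // scale0r.
rewrite big_ord_recl scalerDr scaler_sumr /= muln0 !subn0 odd_coef0 even_coef0 !scale1r -!addrA.
congr (_ + _); rewrite addrA -!big_split /=; apply: eq_bigr => a _.
have lt_am := ltn_ord a.
rewrite (_ : (2 * (m - a.+1)).+2 = 2 * (m - a))%N; last by lia.
rewrite (_ : ((2 * m).+2 - 2 * a.+1) = 2 * (m - a))%N; last by lia.
rewrite -mulnBr; move: (gpoly_div _) => g.
by rewrite !scalerA -!scalerDl even_coef_rec.
Qed.

Lemma odd_expansion_step m : (0 < m)%N ->
  odd_expansion m -> even_expansion m.+1 -> odd_expansion m.+1.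
Proof.
move=> m_gt0 hodd; rewrite /even_expansion /odd_expansion.
rewrite (_ : 2 * m.+1 = (2 * m).+2)%N; last by lia.
move=> heven; have c_neq0 : qnum (2 * m).+3%:Z != 0 by apply: qnum_neq0.
apply: (scalerI c_neq0).
rewrite ppoly_div_rec heven hodd mulr_sumr scaler_sumr !big_ord_recl /=.
rewrite muln0 !subn0 odd_coef0 even_coef0 !scale1r scalerDr scaler_sumr.
rewrite (_ : (2 * m).+2 = 2 * m.+1)%N; last by lia.
rewrite mulX_gpoly_div_even (_ : (2 * m.+1).+1 = (2 * m).+3)%N; last by lia.
rewrite -addrA; congr (_ + _); rewrite -big_split /=; apply: eq_bigr => a _.
have lt_am := ltn_ord a.
rewrite (_ : (2 * m.+1 - 2 * a.+1) = 2 * (m - a))%N; last by lia.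
rewrite -mulnBr -scalerAr mulX_gpoly_div_even; move: (gpoly_div _) => g.
by rewrite !scalerA -!scalerDl odd_coef_rec.
Qed.

Lemma ppoly2 : ppoly 2 = gpoly 2.
Proof.
rewrite ppolySS /gpoly /= big_ord1 subrr expr0z mul1r sub0r qnumN mul1r mulrN.
by rewrite (_ : 2 * 1%:Z - 1 = 1) // qnum1 mulr1 expr1n polyCN mulr1 expr2.
Qed.

Lemma ppoly3 : ppoly 3 = gpoly 3.
Proof.
by rewrite ppolySS subrr qnum0 mulr0 polyC0 mul0r addr0 ppoly2 -(gpoly_odd 1).
Qed.

Lemma expansion1 : even_expansion 1 /\ odd_expansion 1.
Proof.
rewrite /even_expansion /odd_expansion !big_ord1 even_coef0 odd_coef0 !scale1r.
by rewrite /ppoly_div /gpoly_div ppoly2 ppoly3.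
Qed.

Lemma ppoly_div_expansion m : (0 < m)%N -> even_expansion m /\ odd_expansion m.
Proof.
elim: m => // m IHm _; have [-> | m_gt0] := posnP m; first exact: expansion1.
have [heven hodd] := IHm m_gt0.
have heven' := even_expansion_step m_gt0 hodd heven.
by split; last exact: odd_expansion_step.
Qed.

(** * Integrality at the points [2l - 1] *)

Inductive laurent : F -> Prop :=
  | laurent_q : laurent q
  | laurent_qV : laurent q^-1
  | laurent1 : laurent 1
  | laurentN x : laurent x -> laurent (- x)
  | laurentD x y : laurent x -> laurent y -> laurent (x + y)
  | laurentM x y : laurent x -> laurent y -> laurent (x * y).

Lemma laurent0 : laurent 0.
Proof. by rewrite -(subrr 1); apply/laurentD/laurentN/laurent1/laurent1. Qed.

Lemma laurentB x y : laurent x -> laurent y -> laurent (x - y).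
Proof. by move=> lx ly; apply/laurentD/laurentN. Qed.

Lemma laurentXn x n : laurent x -> laurent (x ^+ n).
Proof.
by move=> lx; elim: n => [|n IHn]; rewrite ?expr0 ?exprS; [apply: laurent1 | apply: laurentM].
Qed.

Lemma laurent_qz (z : int) : laurent (q ^ z).
Proof.
case: z => n; first by rewrite -exprnP; apply/laurentXn/laurent_q.
by rewrite NegzE -invr_expz -exprnP -exprVn; apply/laurentXn/laurent_qV.
Qed.

Lemma laurent_sum (I : finType) (f : I -> F) :
  (forall i, laurent (f i)) -> laurent (\sum_i f i).
Proof. by move=> lf; apply: big_ind => //; [apply: laurent0 | apply: laurentD]. Qed.

Lemma laurent_prod (I : finType) (f : I -> F) :
  (forall i, laurent (f i)) -> laurent (\prod_i f i).
Proof. by move=> lf; apply: big_ind => //; [apply: laurent1 | apply: laurentM]. Qed.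

Lemma laurent_qnum (z : int) : laurent (qnum z).
Proof.
have laurent_qnum_nat (n : nat) : laurent (qnum n).
  elim: n => [|n IHn]; first by rewrite qnum0; apply: laurent0.
  rewrite intS addrC qnumD expr1z qnum1 mulr1.
  by apply: laurentD; [apply: laurentM => //; apply: laurent_q | apply: laurent_qz].
by case: z => n; rewrite ?NegzE ?qnumN; [|apply: laurentN]; apply: laurent_qnum_nat.
Qed.

Lemma laurent_qplus_prod k : laurent (qplus_prod k).
Proof. by apply: laurent_prod => j; apply: laurentD; apply: laurent_qz. Qed.

Lemma laurent_qbinomz (n : int) k : laurent (qbinomz n k).
Proof.
elim: k n => [|k IHk] n; first by rewrite qbinomz0; apply: laurent1.
elim/int_ind: n => [|n IHn|n IHn].
- by rewrite qbinomz_eq0 //; apply: laurent0.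
- by rewrite intS addrC qbinomz_pascal; apply: laurentD; apply: laurentM => //; apply: laurent_qz.
- have := qbinomz_pascal (- n.+1%:Z) k.
  rewrite (_ : - n.+1%:Z + 1 = - n%:Z); last by lia.
  set u := q ^ (- _) => pascal.
  have -> : qbinomz (- n.+1%:Z) k.+1 =
      q ^ (- (2 * k.+1%:Z)) * (qbinomz (- n%:Z) k.+1 - u * qbinomz (- n.+1%:Z) k).
    by rewrite pascal addrK mulrA -expfzDr // addNr expr0z mul1r.
  apply: laurentM; first exact: laurent_qz.
  by apply: laurentB => //; apply: laurentM => //; apply: laurent_qz.
Qed.

Lemma gpoly_even_eval (l : int) m :
  (gpoly (2 * m)).[qnum (2 * l - 1)] = qfall (l + m%:Z - 1) (2 * m).
Proof.
rewrite /gpoly mul2n odd_double doubleK mul1r horner_prod -mul2n.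
elim: m => [|m IHm]; first by rewrite big_ord0 muln0 /qfall big_ord0.
rewrite big_ord_recr /= IHm hornerD hornerN hornerXn hornerC qnum_sqr_sub.
rewrite (_ : 2 * m.+1 = (2 * m).+2)%N; last by lia.
rewrite (_ : l + m.+1%:Z - 1 = l + m%:Z - 1 + 1); last by lia.
rewrite qfallSl qfallSr.
rewrite (_ : 2 * l - 1 - (2 * m.+1%:Z - 1) = 2 * (l + m%:Z - 1 - (2 * m)%N%:Z)); last by lia.
rewrite (_ : 2 * l - 1 + (2 * m.+1%:Z - 1) = 2 * (l + m%:Z - 1 + 1)); last by lia.
ring.
Qed.

Lemma gpoly_div_even_eval (l : int) m :
  (gpoly_div (2 * m)).[qnum (2 * l - 1)] =
  qbinomz (l + m%:Z - 1) (2 * m) * qplus_prod (2 * m).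
Proof.
rewrite hornerZ gpoly_even_eval /qbinomz qfall_diag.
have h1 := qfac_neq0 (2 * m); have h2 := qplus_prod_neq0 (2 * m).
by field; rewrite h1 h2.
Qed.

Lemma gpoly_div_odd_eval (l : int) m :
  (gpoly_div (2 * m).+1).[qnum (2 * l - 1)] =
  (qbinomz (l + m%:Z) (2 * m).+1 + qbinomz (l + m%:Z - 1) (2 * m).+1) * qplus_prod (2 * m).
Proof.
set s := q ^ (2 * m).+1%:Z + q ^ (- (2 * m).+1%:Z).
have top : qfall (l + m%:Z) (2 * m).+1 + qfall (l + m%:Z - 1) (2 * m).+1 =
    qfall (l + m%:Z - 1) (2 * m) * (qnum (2 * l - 1) * s).
  rewrite -qnum_sum -{1}(subrK 1 (l + m%:Z)) qfallSl qfallSr [qnum _ * _]mulrC -mulrDr.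
  by congr (_ * (qnum _ + qnum _)); lia.
have diag : qfall (2 * m).+1 (2 * m).+1 =
    qfac (2 * m) * qnum (2 * m).+1%:Z * qplus_prod (2 * m) * s.
  by rewrite qfall_diag qfacS /qplus_prod big_ord_recr -/(qplus_prod _) /= mulrA.
have s_neq0 : s != 0.
  by have := qfall_diag_neq0 (2 * m).+1; rewrite diag mulf_eq0 negb_or => /andP[].
have h1 := qfac_neq0 (2 * m); have h2 := qplus_prod_neq0 (2 * m).
have h3 : qnum (2 * m).+1%:Z != 0 by apply: qnum_neq0.
rewrite /qbinomz -mulrDl top diag.
rewrite /gpoly_div gpoly_odd hornerZ hornerM hornerX gpoly_even_eval qfacS.
by field; rewrite h1 h2 h3 s_neq0.
Qed.

Lemma laurent_gpoly_div_eval (l : int) n : laurent (gpoly_div n).[qnum (2 * l - 1)].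
Proof.
rewrite -(odd_double_half n) -mul2n; case: (odd n); rewrite ?add1n ?add0n.
  rewrite gpoly_div_odd_eval; apply: laurentM; last exact: laurent_qplus_prod.
  by apply: laurentD; apply: laurent_qbinomz.
rewrite gpoly_div_even_eval; apply: laurentM; [exact: laurent_qbinomz | exact: laurent_qplus_prod].
Qed.

Lemma laurent_ppoly_div_eval (l : int) n : laurent (ppoly_div n).[qnum (2 * l - 1)].
Proof.
rewrite -(odd_double_half n) -mul2n; have [-> | m_gt0] := posnP n./2.
  rewrite /ppoly_div /qfac; case: (odd n); rewrite /= ?big_ord1 ?big_ord0 ?qnum1 invr1 scale1r.
    by rewrite hornerX; apply: laurent_qnum.
  by rewrite hornerC; apply: laurent1.
have [heven hodd] := ppoly_div_expansion m_gt0.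
case: (odd n); rewrite ?add1n ?add0n ?hodd ?heven horner_sum; apply: laurent_sum => a;
  rewrite hornerZ; apply: laurentM (laurent_gpoly_div_eval _ _);
  by apply: laurentM; [apply: laurent_qz | apply: laurent_qbinomz].
Qed.

End GenericQ.

(** * The indeterminate q *)

Lemma qq_neq0 : qq != 0.
Proof. by rewrite tofrac_eq0 polyX_eq0. Qed.

Lemma qqXn_neq1 n : (0 < n)%N -> qq ^+ n != 1.
Proof.
move=> n_gt0; rewrite -tofracXn -tofrac1 tofrac_eq.
apply: contraTneq n_gt0 => /(congr1 (fun p : {poly int} => size p)).
by rewrite size_polyXn size_poly1 => -[->].
Qed.

Lemma laurent_ratio (F : fieldType) (f : {rmorphism {poly int} -> F}) x :
  f 'X != 0 -> laurent (f 'X) x -> exists (p : {poly int}) (k : nat), x = f p / f 'X ^+ k.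
Proof.
move=> X_neq0; elim=> [||| y _ [p [k ->]] | y z _ [p1 [k1 ->]] _ [p2 [k2 ->]]
                               | y z _ [p1 [k1 ->]] _ [p2 [k2 ->]]].
- by exists 'X, 0%N; rewrite divr1.
- by exists 1, 1%N; rewrite rmorph1 mul1r.
- by exists 1, 0%N; rewrite rmorph1 divr1.
- by exists (- p), k; rewrite rmorphN mulNr.
- exists (p1 * 'X ^+ k2 + p2 * 'X ^+ k1), (k1 + k2)%N.
  by rewrite rmorphD !rmorphM !rmorphXn exprD; field; rewrite !expf_neq0.
- exists (p1 * p2), (k1 + k2)%N.
  by rewrite rmorphM exprD; field; rewrite !expf_neq0.
Qed.

Lemma laurent_in_Zqqinv x : laurent qq x -> in_Zqqinv x.
Proof.
move=> lx.
by have := @laurent_ratio _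
  (@FracField.tofrac {poly int} : {rmorphism {poly int} -> {fraction {poly int}}}) x qq_neq0 lx.
Qed.

Lemma pfrakdivE n : pfrakdiv n = ppoly_div qq n.
Proof. by []. Qed.

Lemma gfrakdivE n : gfrakdiv n = gpoly_div qq n.
Proof. by []. Qed.

Lemma qbinom2E N a : qbinom2 N a = qgauss2 qq N a.
Proof. by []. Qed.

Theorem proposition4p4 :
  (forall m : nat, (1 <= m)%N ->
     pfrakdiv (2 * m)%N =
       \sum_(a < m) (qq ^ ((3 - 2 * m%:Z) * a%:Z) * qbinom2 (m - 1)%N a)
                      *: gfrakdiv (2 * m - 2 * a)%N
  /\ pfrakdiv (2 * m).+1%N =
       \sum_(a < m) (qq ^ ((1 - 2 * m%:Z) * a%:Z) * qbinom2 (m - 1)%N a)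
                      *: gfrakdiv (2 * m - 2 * a).+1%N)
  /\ (forall (n : nat) (l : int), in_Zqqinv (pfrakdiv n).[qint (2 * l - 1)]).
Proof.
have [hq hX] := (qq_neq0, qqXn_neq1).
split=> [m m_gt0 | n l]; last first.
  by apply: laurent_in_Zqqinv; rewrite pfrakdivE; apply: laurent_ppoly_div_eval.
have [heven hodd] := ppoly_div_expansion hq hX m_gt0.
by split; rewrite pfrakdivE ?heven ?hodd; apply: eq_bigr => a _;
  rewrite gfrakdivE qbinom2E (qgauss2_qbinomz hq hX) //; have := ltn_ord a; lia.
Qed.
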